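(* Assume Schanuel's conjecture $(S)$. Then the numbers $\sqrt{2}^{\,\sqrt{2}^{\,\sqrt{2}}}$, $i^{\,i^{\,i}}$, and $i^{\,e^{\pi}}$ are transcendental.
   Context: Schanuel's conjecture $(S)$: if $\alpha_1,\dots,\alpha_n\in\mathbb{C}$ are linearly independent over $\mathbb{Q}$, then the transcendence degree of $\mathbb{Q}(\alpha_1,\dots,\alpha_n,e^{\alpha_1},\dots,e^{\alpha_n})$ over $\mathbb{Q}$ is at least $n$. Here $i=\sqrt{-1}$, towers are read from the top ($a^{b^{c}}=a^{(b^c)}$), and complex powers use the principal logarithm, $a^b=e^{b\,\mathrm{Log}\,a}$ (so $\mathrm{Log}\, i=\pi i/2$). *)

From Stdlib Require Import Reals QArith Qreals List.
Open Scope R_scope.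

Definition C : Type := (R * R)%type.

Definition Cre (z : C) : R := fst z.
Definition Cim (z : C) : R := snd z.
Definition C0 : C := (0, 0).
Definition C1 : C := (1, 0).
Definition Ci : C := (0, 1).
Definition RtoC (x : R) : C := (x, 0).
Definition Cadd (z w : C) : C := (Cre z + Cre w, Cim z + Cim w).
Definition Cmul (z w : C) : C :=
  (Cre z * Cre w - Cim z * Cim w, Cre z * Cim w + Cim z * Cre w).
Fixpoint Cpow_nat (z : C) (n : nat) : C :=
  match n with O => C1 | S k => Cmul z (Cpow_nat z k) end.

Definition Cexp (z : C) : C :=
  (exp (Cre z) * cos (Cim z), exp (Cre z) * sin (Cim z)).

Definition Cmod (z : C) : R := sqrt (Cre z * Cre z + Cim z * Cim z).

(** principal argument, with values in (-PI, PI] *)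
Definition Carg (z : C) : R :=
  let x := Cre z in let y := Cim z in
  if Rlt_dec 0 x then atan (y / x)
  else if Rlt_dec x 0 then
    (if Rle_dec 0 y then atan (y / x) + PI else atan (y / x) - PI)
  else
    if Rlt_dec 0 y then PI / 2
    else if Rlt_dec y 0 then - (PI / 2) else 0.

Definition CLog (z : C) : C := (ln (Cmod z), Carg z).

Definition Cpow (a b : C) : C := Cexp (Cmul b (CLog a)).

(** A polynomial in [n] variables is a finite list of terms (coefficient,
    exponent vector). *)
Definition qpoly : Type := list (Q * list nat).

Definition mono_eval (m : list nat) (xs : list C) : C :=
  fold_right Cmul C1 (map (fun ex => Cpow_nat (snd ex) (fst ex)) (combine m xs)).

Definition qpoly_eval (p : qpoly) (xs : list C) : C :=
  fold_right Cadd C0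
    (map (fun t => Cmul (RtoC (Q2R (fst t))) (mono_eval (snd t) xs)) p).

(** well-formed polynomial in n variables: exponent vectors of length n,
    pairwise distinct monomials (so the list is the coefficient representation) *)
Definition qpoly_wf (n : nat) (p : qpoly) : Prop :=
  Forall (fun t => length (snd t) = n) p /\ NoDup (map snd p).

Definition qpoly_nonzero (p : qpoly) : Prop :=
  exists t, In t p /\ ~ (fst t == 0)%Q.

Definition alg_indep (ys : list C) : Prop :=
  forall p, qpoly_wf (length ys) p -> qpoly_nonzero p -> qpoly_eval p ys <> C0.

Definition in_field_gen (xs : list C) (z : C) : Prop :=
  exists P Qd, qpoly_wf (length xs) P /\ qpoly_wf (length xs) Qd /\
    qpoly_eval Qd xs <> C0 /\ Cmul z (qpoly_eval Qd xs) = qpoly_eval P xs.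

Definition trdeg_ge (xs : list C) (n : nat) : Prop :=
  exists ys, length ys = n /\ Forall (in_field_gen xs) ys /\ alg_indep ys.

Definition Q_lin_indep (alphas : list C) : Prop :=
  forall qs : list Q, length qs = length alphas ->
    fold_right Cadd C0 (map (fun qa => Cmul (RtoC (Q2R (fst qa))) (snd qa))
                            (combine qs alphas)) = C0 ->
    Forall (fun q => (q == 0)%Q) qs.

Definition transcendental (z : C) : Prop :=
  forall p, qpoly_wf 1 p -> qpoly_nonzero p -> qpoly_eval p (z :: nil) <> C0.

Definition Schanuel : Prop :=
  forall alphas : list C, Q_lin_indep alphas ->
    trdeg_ge (alphas ++ map Cexp alphas) (length alphas).

Definition Csqrt2 : C := RtoC (sqrt 2).

(** With [l = Log a] and [w = a^b = exp (b l)], the tower [a^(a^b)] is [exp (w l)].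
    For algebraic [a] and irrational algebraic [b], all of [l, b l, w l] and their
    exponentials [a, w, a^(a^b)] lie in [K[l, w]] for a number field [K] as soon as
    [a^(a^b)] is algebraic, while Schanuel's conjecture gives them transcendence degree 3,
    provided [l, b l, w l] are Q-linearly independent, i.e. [w] is not in [Q + Q b].
    The same argument with [l, b l] inside [K[l]] shows that [w] is even transcendental.
    That [K[b1, ..., bm]] has transcendence degree at most [m] is a counting argument: after
    clearing denominators, the [(D+1)^n] monomials of degree at most [D] in [n] algebraically
    independent elements would be linearly independent in a space of dimension [O(D^m)]. *)

From Stdlib Require Import Reals QArith Qreals List Lra Lia Psatz Classical ZArith.
From Stdlib Require FinFun.
Open Scope R_scope.

Definition Copp (z : C) : C := (- Cre z, - Cim z).

Lemma C_ring_theory :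
  ring_theory C0 C1 Cadd Cmul (fun z w => Cadd z (Copp w)) Copp (@eq C).
Proof.
  constructor; intros; repeat match goal with z : C |- _ => destruct z end;
  unfold Cadd, Cmul, Copp, C0, C1, Cre, Cim; simpl; f_equal; ring.
Qed.
Add Ring C_ring : C_ring_theory.

Definition Qc (q : Q) : C := RtoC (Q2R q).

Lemma Cpow_nat_add a m n : Cpow_nat a (m + n) = Cmul (Cpow_nat a m) (Cpow_nat a n).
Proof. induction m as [|m IH]; simpl; [ring | rewrite IH; ring]. Qed.

Lemma Cpow_nat_mul a b n : Cpow_nat (Cmul a b) n = Cmul (Cpow_nat a n) (Cpow_nat b n).
Proof. induction n as [|n IH]; simpl; [|rewrite IH]; ring. Qed.

Lemma C1_neq_C0 : C1 <> C0.
Proof. intro E; injection E; lra. Qed.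

Lemma Cmul_integral z w : Cmul z w = C0 -> z = C0 \/ w = C0.
Proof.
  destruct z as [a b], w as [c d]; unfold Cmul, C0, Cre, Cim; simpl; intro E.
  injection E as E1 E2.
  assert (Hn : (a * a + b * b) * (c * c + d * d) = 0) by nra.
  apply Rmult_integral in Hn as [Hn | Hn]; [left | right]; f_equal; nra.
Qed.

Lemma Cpow_nat_neq0 a n : a <> C0 -> Cpow_nat a n <> C0.
Proof.
  intro Ha; induction n as [|n IH]; simpl; [exact C1_neq_C0|].
  intro E; apply Cmul_integral in E; tauto.
Qed.

Lemma Q2R_neq0 q : ~ q == 0 -> Q2R q <> 0.
Proof. intros Hq E; apply Hq, eqR_Qeq; rewrite E; unfold Q2R; simpl; ring. Qed.

Lemma Qc_plus p q : Qc (p + q) = Cadd (Qc p) (Qc q).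
Proof. unfold Qc, RtoC, Cadd; simpl; rewrite Q2R_plus; f_equal; ring. Qed.

Lemma Qc_mult p q : Qc (p * q) = Cmul (Qc p) (Qc q).
Proof. unfold Qc, RtoC, Cmul; simpl; rewrite Q2R_mult; f_equal; ring. Qed.

Lemma Qc_opp q : Qc (- q) = Copp (Qc q).
Proof. unfold Qc, RtoC, Copp; simpl; rewrite Q2R_opp; f_equal; ring. Qed.

Lemma Qc_0 q : q == 0 -> Qc q = C0.
Proof.
  intro Hq; unfold Qc; rewrite (Qeq_eqR _ _ Hq); unfold RtoC, C0, Q2R; simpl; f_equal; ring.
Qed.

Lemma Qc_1 : Qc 1 = C1.
Proof. unfold Qc, RtoC, C1, Q2R; simpl; f_equal; field. Qed.

Lemma Qc_inv_l q : ~ q == 0 -> Cmul (Qc (/ q)) (Qc q) = C1.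
Proof.
  intro Hq; pose proof (Q2R_neq0 q Hq).
  unfold Qc, RtoC, Cmul, C1, Cre, Cim; simpl; rewrite Q2R_inv by exact Hq; f_equal; field; auto.
Qed.

(** * Spans over Q *)

Inductive Qspan (L : list C) : C -> Prop :=
| Qspan_0 : Qspan L C0
| Qspan_step q v x : In v L -> Qspan L x -> Qspan L (Cadd (Cmul (Qc q) v) x).

Lemma Qspan_eq L x y : Qspan L x -> x = y -> Qspan L y.
Proof. intros; subst; auto. Qed.

Lemma Qspan_in L v : In v L -> Qspan L v.
Proof.
  intro Hv; apply Qspan_eq with (Cadd (Cmul (Qc 1) v) C0); [now constructor; [|constructor]|].
  rewrite Qc_1; ring.
Qed.

Lemma Qspan_add L x y : Qspan L x -> Qspan L y -> Qspan L (Cadd x y).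
Proof.
  intros Hx Hy; induction Hx as [|q v x Hv Hx IH]; [apply Qspan_eq with y; auto; ring|].
  apply Qspan_eq with (Cadd (Cmul (Qc q) v) (Cadd x y)); [constructor; auto | ring].
Qed.

Lemma Qspan_scale L q x : Qspan L x -> Qspan L (Cmul (Qc q) x).
Proof.
  intro Hx; induction Hx as [|q' v x Hv Hx IH]; [apply Qspan_eq with C0; [constructor | ring]|].
  apply Qspan_eq with (Cadd (Cmul (Qc (q * q')) v) (Cmul (Qc q) x)); [constructor; auto|].
  rewrite Qc_mult; ring.
Qed.

Lemma Qspan_opp L x : Qspan L x -> Qspan L (Copp x).
Proof.
  intro Hx; apply Qspan_eq with (Cmul (Qc (- (1))) x); [apply Qspan_scale; auto|].
  rewrite Qc_opp, Qc_1; ring.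
Qed.

Lemma Qspan_incl L L' x : incl L L' -> Qspan L x -> Qspan L' x.
Proof. intros HL Hx; induction Hx; constructor; auto. Qed.

Lemma Qspan_trans L L' x : Forall (Qspan L') L -> Qspan L x -> Qspan L' x.
Proof.
  intros HL Hx; induction Hx as [|q v x Hv Hx IH]; [constructor|].
  apply Qspan_add; auto; apply Qspan_scale.
  exact (proj1 (Forall_forall _ _) HL v Hv).
Qed.

Lemma Qspan_map_mul L c x : Qspan L x -> Qspan (map (Cmul c) L) (Cmul c x).
Proof.
  intro Hx; induction Hx as [|q v x Hv Hx IH]; [apply Qspan_eq with C0; [constructor | ring]|].
  apply Qspan_eq with (Cadd (Cmul (Qc q) (Cmul c v)) (Cmul c x)); [|ring].
  constructor; auto; apply in_map; auto.
Qed.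

Lemma Qspan_mul L1 L2 L3 x y :
  (forall s t, In s L1 -> In t L2 -> Qspan L3 (Cmul s t)) ->
  Qspan L1 x -> Qspan L2 y -> Qspan L3 (Cmul x y).
Proof.
  intros H Hx Hy; induction Hx as [|q v x Hv Hx IH];
    [apply Qspan_eq with C0; [constructor | ring]|].
  apply Qspan_eq with (Cadd (Cmul (Qc q) (Cmul v y)) (Cmul x y)); [|ring].
  apply Qspan_add; auto; apply Qspan_scale.
  clear IH; induction Hy as [|q' w y Hw Hy IH]; [apply Qspan_eq with C0; [constructor | ring]|].
  apply Qspan_eq with (Cadd (Cmul (Qc q') (Cmul v w)) (Cmul v y)); [|ring].
  apply Qspan_add; auto; apply Qspan_scale; auto.
Qed.

Lemma Qspan_nil x : Qspan nil x -> x = C0.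
Proof. intro Hx; inversion Hx; auto; contradiction. Qed.

Lemma Qspan_cons_inv w L x : Qspan (w :: L) x ->
  exists q x', Qspan L x' /\ x = Cadd (Cmul (Qc q) w) x'.
Proof.
  intro Hx; induction Hx as [|q v x Hv Hx IH].
  - exists 0%Q, C0; split; [constructor|]; rewrite Qc_0 by reflexivity; ring.
  - destruct IH as [q' [x' [Hx' ->]]]; destruct Hv as [<- | Hv].
    + exists (q + q')%Q, x'; split; auto; rewrite Qc_plus; ring.
    + exists q', (Cadd (Cmul (Qc q) v) x'); split; [constructor; auto | ring].
Qed.

Lemma Cadd_eq0_r a b : Cadd a b = C0 -> b = Copp a.
Proof. intro E; transitivity (Cadd (Cadd a b) (Copp a)); [ring | rewrite E; ring]. Qed.

Definition lincomb (qs : list Q) (vs : list C) : C :=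
  fold_right Cadd C0 (map (fun qv => Cmul (Qc (fst qv)) (snd qv)) (combine qs vs)).

Lemma lincomb_cons q qs v vs :
  lincomb (q :: qs) (v :: vs) = Cadd (Cmul (Qc q) v) (lincomb qs vs).
Proof. reflexivity. Qed.

Lemma lincomb_app qs1 qs2 vs1 vs2 : length qs1 = length vs1 ->
  lincomb (qs1 ++ qs2) (vs1 ++ vs2) = Cadd (lincomb qs1 vs1) (lincomb qs2 vs2).
Proof.
  revert vs1; induction qs1 as [|q qs1 IH]; intros [|v vs1] Hl; simpl in *; try discriminate.
  - unfold lincomb at 2; simpl; ring.
  - rewrite !lincomb_cons, IH by lia; ring.
Qed.

Lemma lincomb_map_mul_r qs vs c :
  lincomb qs (map (fun v => Cmul v c) vs) = Cmul (lincomb qs vs) c.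
Proof.
  revert vs; induction qs as [|q qs IH]; intros [|v vs]; try (unfold lincomb; simpl; ring).
  cbn [map]; rewrite !lincomb_cons, IH; ring.
Qed.

Lemma lincomb_Qspan qs vs : Qspan vs (lincomb qs vs).
Proof.
  revert vs; induction qs as [|q qs IH]; intros [|v vs]; [constructor..|].
  rewrite lincomb_cons; constructor; [left; auto|].
  apply Qspan_incl with vs; [intros x Hx; right; auto | apply IH].
Qed.

Definition Q_lin_dep (vs : list C) : Prop :=
  exists qs, length qs = length vs /\ Exists (fun q => ~ q == 0) qs /\ lincomb qs vs = C0.

Lemma Q_lin_indep_cons x vs : ~ Qspan vs x -> Q_lin_indep vs -> Q_lin_indep (x :: vs).
Proof.
  intros Hx Hvs [|q qs] Hl E; simpl in Hl; [discriminate|].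
  change (lincomb (q :: qs) (x :: vs) = C0) in E; rewrite lincomb_cons in E.
  assert (Hq : q == 0).
  { apply NNPP; intro Hq; apply Hx.
    apply Qspan_eq with (Cmul (Qc (- / q)) (lincomb qs vs)); [apply Qspan_scale, lincomb_Qspan|].
    rewrite (Cadd_eq0_r _ _ E).
    rewrite Qc_opp; transitivity (Cmul (Cmul (Qc (/ q)) (Qc q)) x); [ring|].
    rewrite Qc_inv_l by exact Hq; ring. }
  constructor; [exact Hq|]; apply Hvs; [lia|].
  change (lincomb qs vs = C0); rewrite (Qc_0 q Hq) in E; rewrite <- E; ring.
Qed.

Lemma Q_lin_indep_map_mul_r vs c :
  c <> C0 -> Q_lin_indep vs -> Q_lin_indep (map (fun v => Cmul v c) vs).
Proof.
  intros Hc Hvs qs Hl E; rewrite length_map in Hl; apply Hvs; [exact Hl|].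
  change (lincomb qs (map (fun v => Cmul v c) vs) = C0) in E.
  rewrite lincomb_map_mul_r in E; apply Cmul_integral in E as [E | E]; [exact E | contradiction].
Qed.

Lemma Q_lin_dep_app_comm vs ws : Q_lin_dep (ws ++ vs) -> Q_lin_dep (vs ++ ws).
Proof.
  intros [qs [Hl [Hnz E]]]; rewrite length_app in Hl.
  set (k := length ws).
  assert (Hsplit : qs = firstn k qs ++ skipn k qs) by (symmetry; apply firstn_skipn).
  assert (Hl1 : length (firstn k qs) = length ws) by (rewrite length_firstn; lia).
  assert (Hl2 : length (skipn k qs) = length vs) by (rewrite length_skipn; lia).
  exists (skipn k qs ++ firstn k qs); split; [rewrite !length_app; lia|split].
  - rewrite Hsplit in Hnz; apply Exists_app in Hnz; apply Exists_app; tauto.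
  - rewrite Hsplit, lincomb_app in E by exact Hl1.
    rewrite lincomb_app by exact Hl2; rewrite <- E; ring.
Qed.

Definition sub_scaled (vs : list C) (rs : list Q) (v : C) : list C :=
  map (fun ur => Cadd (fst ur) (Copp (Cmul (Qc (snd ur)) v))) (combine vs rs).

Definition Qdot (qs rs : list Q) : Q :=
  fold_right Qplus 0%Q (map (fun p => (fst p * snd p)%Q) (combine qs rs)).

Lemma lincomb_sub_scaled qs vs rs v : length qs = length vs -> length vs = length rs ->
  lincomb qs (sub_scaled vs rs v) = Cadd (lincomb qs vs) (Copp (Cmul (Qc (Qdot qs rs)) v)).
Proof.
  revert vs rs; induction qs as [|q qs IH]; intros [|u vs] [|r rs] Hl1 Hl2;
    simpl in *; try discriminate.
  - unfold lincomb, Qdot; simpl; rewrite Qc_0 by reflexivity; ring.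
  - change (sub_scaled (u :: vs) (r :: rs) v)
      with (Cadd u (Copp (Cmul (Qc r) v)) :: sub_scaled vs rs v).
    rewrite !lincomb_cons, IH by lia.
    change (Qdot (q :: qs) (r :: rs)) with (q * r + Qdot qs rs)%Q.
    rewrite Qc_plus, Qc_mult; ring.
Qed.

(** Eliminating the [w]-coordinate of [rest] using [v = c w + v'] with [c <> 0]. *)
Lemma Qspan_eliminate w W v c v' rest :
  v = Cadd (Cmul (Qc c) w) v' -> ~ c == 0 -> Qspan W v' ->
  Forall (Qspan (w :: W)) rest ->
  exists rs, length rs = length rest /\ Forall (Qspan W) (sub_scaled rest rs v).
Proof.
  intros -> Hc Hv' Hrest; induction Hrest as [|u rest Hu Hrest IH]; [exists nil; simpl; auto|].
  destruct IH as [rs [Hl Hrs]].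
  apply Qspan_cons_inv in Hu as [q [u' [Hu' ->]]].
  exists ((q / c)%Q :: rs); split; [simpl; auto|constructor; [|exact Hrs]].
  apply Qspan_eq with (Cadd u' (Copp (Cmul (Qc (q / c)) v'))).
  - apply Qspan_add, Qspan_opp, Qspan_scale; assumption.
  - cbn [fst snd]; unfold Qdiv; rewrite Qc_mult.
    replace (Cmul (Qc q) w) with (Cmul (Cmul (Qc q) (Cmul (Qc (/ c)) (Qc c))) w)
      by (rewrite Qc_inv_l by exact Hc; ring).
    ring.
Qed.

Lemma Q_lin_dep_exchange w W v rest :
  (forall vs, length vs = length rest -> Forall (Qspan W) vs -> Q_lin_dep vs) ->
  ~ Qspan W v -> Qspan (w :: W) v -> Forall (Qspan (w :: W)) rest ->
  Q_lin_dep (v :: rest).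
Proof.
  intros IH HvW Hv Hrest.
  destruct (Qspan_cons_inv _ _ _ Hv) as [c [v' [Hv' Hdec]]].
  assert (Hc : ~ c == 0).
  { intro Hc; apply HvW; rewrite Hdec, (Qc_0 c Hc).
    apply Qspan_eq with v'; [exact Hv' | ring]. }
  destruct (Qspan_eliminate w W v c v' rest Hdec Hc Hv' Hrest) as [rs [Hrs HW]].
  assert (Hlen : length (sub_scaled rest rs v) = length rest)
    by (unfold sub_scaled; rewrite length_map, length_combine; lia).
  destruct (IH _ Hlen HW) as [qs [Hl [Hnz E]]].
  exists ((- Qdot qs rs)%Q :: qs); split; [simpl; lia|split; [constructor 2; exact Hnz|]].
  rewrite lincomb_sub_scaled in E by lia.
  rewrite lincomb_cons, Qc_opp, <- E; ring.
Qed.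

Lemma Qspan_Q_lin_dep W vs :
  (length W < length vs)%nat -> Forall (Qspan W) vs -> Q_lin_dep vs.
Proof.
  revert vs; induction W as [|w W IH]; intros vs Hl Hvs.
  - exists (repeat 1%Q (length vs)); split; [apply repeat_length|split].
    + destruct vs; [simpl in Hl; lia|]; constructor; discriminate.
    + clear Hl; induction Hvs as [|v vs Hv Hvs IHvs]; [reflexivity|].
      simpl repeat; rewrite lincomb_cons, IHvs, (Qspan_nil _ Hv); ring.
  - destruct (classic (Forall (Qspan W) vs)) as [HW | HW]; [apply IH; simpl in Hl; auto; lia|].
    apply Exists_Forall_neg in HW; [|intros; tauto].
    apply Exists_exists in HW as [v [Hin HvW]].
    apply in_split in Hin as [pre [post ->]].
    apply Q_lin_dep_app_comm; simpl.
    apply Forall_app in Hvs as [Hpre Hpost]; inversion Hpost; subst.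
    apply Q_lin_dep_exchange with w W; auto; [|apply Forall_app; auto].
    intros vs Hlen HvsW; apply IH; auto.
    rewrite Hlen, !length_app; rewrite length_app in Hl; simpl in Hl; lia.
Qed.

(** Finite-dimensional Q-subalgebras of C, represented by spanning lists. *)
Definition Qalg (A : list C) : Prop :=
  Qspan A C1 /\ forall s t, In s A -> In t A -> Qspan A (Cmul s t).

Lemma Qalg_Qc A q : Qalg A -> Qspan A (Qc q).
Proof.
  intros [H1 _]; apply Qspan_eq with (Cmul (Qc q) C1); [apply Qspan_scale, H1|].
  unfold Qc, RtoC, C1, Cmul; simpl; f_equal; ring.
Qed.

Definition prod_basis (A B : list C) : list C := flat_map (fun s => map (Cmul s) B) A.

Lemma Qspan_prod_basis A B x y : Qspan A x -> Qspan B y -> Qspan (prod_basis A B) (Cmul x y).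
Proof.
  apply Qspan_mul; intros s t Hs Ht; apply Qspan_in.
  apply in_flat_map; exists s; split; [exact Hs | apply in_map, Ht].
Qed.

Lemma Qalg_prod_basis A B : Qalg A -> Qalg B -> Qalg (prod_basis A B).
Proof.
  intros [HA1 HA2] [HB1 HB2]; split.
  - apply Qspan_eq with (Cmul C1 C1); [apply Qspan_prod_basis; auto | ring].
  - intros s t Hs Ht; unfold prod_basis in Hs, Ht.
    apply in_flat_map in Hs as [s1 [Hs1 Hs]], Ht as [t1 [Ht1 Ht]].
    apply in_map_iff in Hs as [s2 [<- Hs2]], Ht as [t2 [<- Ht2]].
    apply Qspan_eq with (Cmul (Cmul s1 t1) (Cmul s2 t2)); [apply Qspan_prod_basis; auto | ring].
Qed.

Lemma Qspan_prod_basis_l A B x : Qalg B -> Qspan A x -> Qspan (prod_basis A B) x.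
Proof.
  intros [HB _] Hx; apply Qspan_eq with (Cmul x C1); [apply Qspan_prod_basis; auto | ring].
Qed.

Lemma Qspan_prod_basis_r A B x : Qalg A -> Qspan B x -> Qspan (prod_basis A B) x.
Proof.
  intros [HA _] Hx; apply Qspan_eq with (Cmul C1 x); [apply Qspan_prod_basis; auto | ring].
Qed.

Definition Qalgebraic (z : C) : Prop := exists A, Qalg A /\ Qspan A z.

Lemma Qalgebraic_common zs :
  Forall Qalgebraic zs -> exists A, Qalg A /\ Forall (Qspan A) zs.
Proof.
  induction 1 as [|z zs [B [HB Hz]] _ [A [HA Hzs]]].
  - exists (C1 :: nil); split; [split|constructor].
    + apply Qspan_in; left; reflexivity.
    + intros s t [<- | []] [<- | []]; apply Qspan_eq with C1; [apply Qspan_in; left; auto | ring].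
  - exists (prod_basis A B); split; [apply Qalg_prod_basis; auto|].
    constructor; [apply Qspan_prod_basis_r; auto|].
    eapply Forall_impl; [|exact Hzs]; intros; apply Qspan_prod_basis_l; auto.
Qed.

Lemma Qalgebraic_Qspan zs x : Forall Qalgebraic zs -> Qspan zs x -> Qalgebraic x.
Proof.
  intros Hzs Hx; destruct (Qalgebraic_common zs Hzs) as [A [HA HzA]].
  exists A; split; [exact HA | apply Qspan_trans with zs; auto].
Qed.

(** * Algebraic numbers generate finite-dimensional algebras *)

Definition powers (a : C) (d : nat) : list C := map (Cpow_nat a) (seq 0 d).

Lemma Cpow_nat_in_powers a d k : (k < d)%nat -> Qspan (powers a d) (Cpow_nat a k).
Proof. intro Hk; apply Qspan_in, in_map, in_seq; lia. Qed.

Lemma powers_Qspan_all a d :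
  Qspan (powers a d) (Cpow_nat a d) -> forall k, Qspan (powers a d) (Cpow_nat a k).
Proof.
  intros Hd k; induction k as [|k IH].
  - destruct d; [apply Qspan_nil in Hd; contradiction C1_neq_C0|].
    apply Cpow_nat_in_powers; lia.
  - apply Qspan_mul with (a :: nil) (powers a d); [|apply Qspan_in; left; auto | exact IH].
    intros s t [<- | []] Ht; apply in_map_iff in Ht as [j [<- Hj]]; apply in_seq in Hj.
    change (Qspan (powers a d) (Cpow_nat a (S j))).
    destruct (Nat.eq_dec (S j) d) as [-> | Hne]; [exact Hd | apply Cpow_nat_in_powers; lia].
Qed.

Lemma powers_Qalg a d : Qspan (powers a d) (Cpow_nat a d) -> Qalg (powers a d).
Proof.
  intro Hd; split; [exact (powers_Qspan_all a d Hd 0)|].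
  intros s t Hs Ht; apply in_map_iff in Hs as [i [<- _]], Ht as [j [<- _]].
  rewrite <- Cpow_nat_add; apply powers_Qspan_all, Hd.
Qed.

Lemma Qalgebraic_of_powers a d : Qspan (powers a d) (Cpow_nat a d) -> Qalgebraic a.
Proof.
  intro Hd; exists (powers a d); split; [apply powers_Qalg, Hd|].
  apply Qspan_eq with (Cpow_nat a 1); [apply powers_Qspan_all, Hd | simpl; ring].
Qed.

Lemma Qalgebraic_of_sqr a q : Cmul a a = Qc q -> Qalgebraic a.
Proof.
  intro Ha; apply Qalgebraic_of_powers with 2%nat.
  apply Qspan_eq with (Cmul (Qc q) (Cpow_nat a 0)); [apply Qspan_scale, Cpow_nat_in_powers; lia|].
  simpl; rewrite <- Ha; ring.
Qed.

Definition term_deg (t : Q * list nat) : nat := hd 0%nat (snd t).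

Lemma qpoly_eval_app p p' xs :
  qpoly_eval (p ++ p') xs = Cadd (qpoly_eval p xs) (qpoly_eval p' xs).
Proof.
  unfold qpoly_eval; rewrite map_app, fold_right_app.
  induction p as [|t p IH]; simpl; [|rewrite IH]; ring.
Qed.

Lemma qpoly_eval1_cons t p a : length (snd t) = 1%nat ->
  qpoly_eval (t :: p) (a :: nil)
  = Cadd (Cmul (Qc (fst t)) (Cpow_nat a (term_deg t))) (qpoly_eval p (a :: nil)).
Proof.
  destruct t as [q [|e [|]]]; simpl; intro H; try discriminate.
  unfold qpoly_eval, mono_eval, term_deg, Qc; simpl; ring.
Qed.

Lemma qpoly_eval1_Qspan a d p :
  Forall (fun t => length (snd t) = 1%nat /\ (term_deg t < d)%nat) p ->
  Qspan (powers a d) (qpoly_eval p (a :: nil)).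
Proof.
  induction 1 as [|t p [H1 H2] _ IH]; [constructor|].
  rewrite qpoly_eval1_cons by exact H1.
  apply Qspan_add, IH; apply Qspan_scale, Cpow_nat_in_powers, H2.
Qed.

Lemma exists_max_term_deg (p : qpoly) : p <> nil ->
  exists t0, In t0 p /\ forall t, In t p -> (term_deg t <= term_deg t0)%nat.
Proof.
  induction p as [|t p IH]; intro Hp; [congruence|].
  destruct p as [|t' p]; [exists t; split; [left; auto | intros t1 [<- | []]; lia]|].
  destruct IH as [t0 [Ht0 Hmax]]; [discriminate|].
  destruct (Nat.le_gt_cases (term_deg t) (term_deg t0)).
  - exists t0; split; [right; exact Ht0|]; intros t1 [<- | Ht1]; auto.
  - exists t; split; [left; auto|]; intros t1 [<- | Ht1]; [lia|].
    specialize (Hmax _ Ht1); lia.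
Qed.

Lemma root_top_power a t0 p : length (snd t0) = 1%nat -> ~ fst t0 == 0 ->
  Forall (fun t => length (snd t) = 1%nat /\ (term_deg t < term_deg t0)%nat) p ->
  qpoly_eval (t0 :: p) (a :: nil) = C0 ->
  Qspan (powers a (term_deg t0)) (Cpow_nat a (term_deg t0)).
Proof.
  intros H1 Hc Hp E; rewrite qpoly_eval1_cons in E by exact H1.
  apply Cadd_eq0_r in E.
  apply Qspan_eq with (Cmul (Qc (- / fst t0)) (qpoly_eval p (a :: nil))).
  - apply Qspan_scale, qpoly_eval1_Qspan, Hp.
  - rewrite E, Qc_opp.
    transitivity (Cmul (Cmul (Qc (/ fst t0)) (Qc (fst t0))) (Cpow_nat a (term_deg t0))); [ring|].
    rewrite Qc_inv_l by exact Hc; ring.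
Qed.

Lemma qpoly_eval_middle p1 t p2 xs :
  qpoly_eval (p1 ++ t :: p2) xs = qpoly_eval (t :: p1 ++ p2) xs.
Proof.
  rewrite !qpoly_eval_app; change (t :: p1 ++ p2) with ((t :: nil) ++ p1 ++ p2).
  change (t :: p2) with ((t :: nil) ++ p2); rewrite !qpoly_eval_app; ring.
Qed.

Lemma term_deg_eq t t' : length (snd t) = 1%nat -> length (snd t') = 1%nat ->
  term_deg t = term_deg t' -> snd t = snd t'.
Proof.
  destruct t as [q [|e [|]]], t' as [q' [|e' [|]]]; simpl; intros; try discriminate.
  unfold term_deg in *; simpl in *; congruence.
Qed.

Lemma qpoly_root_top_power a N p : (length p <= N)%nat ->
  Forall (fun t => length (snd t) = 1%nat) p -> NoDup (map snd p) ->
  qpoly_nonzero p -> qpoly_eval p (a :: nil) = C0 ->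
  exists d, Qspan (powers a d) (Cpow_nat a d).
Proof.
  revert p; induction N as [|N IH]; intros p Hl Hwf Hnd [t [Ht Htnz]] E;
    [destruct p; [contradiction | simpl in Hl; lia]|].
  destruct (exists_max_term_deg p) as [t0 [Ht0 Hmax]]; [intros ->; contradiction|].
  apply in_split in Ht0 as [p1 [p2 ->]].
  rewrite qpoly_eval_middle in E.
  rewrite map_app in Hnd; simpl in Hnd.
  pose proof (NoDup_remove_2 _ _ _ Hnd) as Ht0new; apply NoDup_remove_1 in Hnd.
  rewrite <- map_app in Hnd, Ht0new.
  apply Forall_app in Hwf as [Hwf1 Hwf2]; inversion Hwf2 as [|? ? Hwf0 Hwf2']; subst.
  assert (Hwf' : Forall (fun t => length (snd t) = 1%nat) (p1 ++ p2)) by (apply Forall_app; auto).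
  destruct (classic (fst t0 == 0)) as [Hc0 | Hc0].
  - apply (IH (p1 ++ p2)); auto.
    + rewrite length_app in *; simpl in Hl; lia.
    + exists t; split; [|exact Htnz].
      apply in_app_or in Ht as [Ht | [<- | Ht]];
        [apply in_or_app; auto | contradiction | apply in_or_app; auto].
    + rewrite qpoly_eval1_cons, Qc_0 in E by auto; rewrite <- E; ring.
  - exists (term_deg t0); apply root_top_power with (p1 ++ p2); auto.
    apply Forall_forall; intros t' Ht'; pose proof (proj1 (Forall_forall _ _) Hwf' t' Ht') as Hw'.
    split; [exact Hw'|].
    assert (Hle : (term_deg t' <= term_deg t0)%nat)
      by (apply Hmax; apply in_app_or in Ht'; apply in_or_app; simpl; tauto).
    assert (Hne : term_deg t' <> term_deg t0).
    { intro Heq; apply Ht0new; rewrite <- (term_deg_eq t' t0); auto; apply in_map, Ht'. }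
    lia.
Qed.

Lemma not_transcendental_Qalgebraic z : ~ transcendental z -> Qalgebraic z.
Proof.
  intro Hz; apply not_all_ex_not in Hz as [p Hz].
  apply imply_to_and in Hz as [[Hwf Hnd] Hz]; apply imply_to_and in Hz as [Hnz Hz].
  apply NNPP in Hz.
  destruct (qpoly_root_top_power z (length p) p (le_n _) Hwf Hnd Hnz Hz) as [d Hd].
  exact (Qalgebraic_of_powers z d Hd).
Qed.

Fixpoint monomials (bs A : list C) (D : nat) : list C :=
  match bs with
  | nil => A
  | b :: bs' => flat_map (fun j => map (Cmul (Cpow_nat b j)) (monomials bs' A D)) (seq 0 (S D))
  end.

Lemma length_monomials bs A D :
  length (monomials bs A D) = (S D ^ length bs * length A)%nat.
Proof.
  induction bs as [|b bs IH]; [simpl; lia|]; cbn [monomials length].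
  rewrite (flat_map_constant_length (c := (S D ^ length bs * length A)%nat));
    [rewrite length_seq; simpl; lia | intros; rewrite length_map; exact IH].
Qed.

Lemma in_monomials_cons b bs A D x :
  In x (monomials (b :: bs) A D) <->
  exists j y, (j <= D)%nat /\ In y (monomials bs A D) /\ x = Cmul (Cpow_nat b j) y.
Proof.
  cbn [monomials]; rewrite in_flat_map; split.
  - intros [j [Hj Hx]]; apply in_seq in Hj; apply in_map_iff in Hx as [y [<- Hy]].
    exists j, y; repeat split; auto; lia.
  - intros [j [y [Hj [Hy ->]]]]; exists j; split; [apply in_seq; lia | apply in_map, Hy].
Qed.

Lemma Qspan_monomials_cons b bs A D j x : (j <= D)%nat ->
  Qspan (monomials bs A D) x -> Qspan (monomials (b :: bs) A D) (Cmul (Cpow_nat b j) x).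
Proof.
  intros Hj Hx; apply Qspan_incl with (map (Cmul (Cpow_nat b j)) (monomials bs A D));
    [|apply Qspan_map_mul, Hx].
  intros y Hy; apply in_map_iff in Hy as [u [<- Hu]].
  apply in_monomials_cons; exists j, u; auto.
Qed.

Lemma monomials_mono bs A D D' : (D <= D')%nat -> incl (monomials bs A D) (monomials bs A D').
Proof.
  intro HD; induction bs as [|b bs IH]; intros x Hx; [exact Hx|].
  apply in_monomials_cons in Hx as [j [y [Hj [Hy ->]]]].
  apply in_monomials_cons; exists j, y; repeat split; auto; lia.
Qed.

(** Elements of the algebra [(span A)[bs]] of degree at most [D] in each generator. *)
Definition adjoin_deg (bs A : list C) (D : nat) (x : C) : Prop := Qspan (monomials bs A D) x.

Lemma adjoin_deg_mono bs A D D' x : (D <= D')%nat -> adjoin_deg bs A D x -> adjoin_deg bs A D' x.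
Proof. intro HD; apply Qspan_incl, monomials_mono, HD. Qed.

Lemma adjoin_deg_Qspan bs A D x : Qspan A x -> adjoin_deg bs A D x.
Proof.
  induction bs as [|b bs IH]; intro Hx; [exact Hx|].
  apply Qspan_eq with (Cmul (Cpow_nat b 0) x);
    [apply Qspan_monomials_cons, IH; auto; lia | simpl; ring].
Qed.

Lemma adjoin_deg_gen bs A b : Qalg A -> In b bs -> adjoin_deg bs A 1 b.
Proof.
  intro HA; induction bs as [|b' bs IH]; intro Hb; [destruct Hb|]; destruct Hb as [-> | Hb].
  - apply Qspan_eq with (Cmul (Cpow_nat b 1) C1); [|simpl; ring].
    apply Qspan_monomials_cons, adjoin_deg_Qspan, HA; lia.
  - apply Qspan_eq with (Cmul (Cpow_nat b' 0) b); [|simpl; ring].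
    apply Qspan_monomials_cons, IH, Hb; lia.
Qed.

Lemma monomials_mul bs A E F s t : Qalg A ->
  In s (monomials bs A E) -> In t (monomials bs A F) -> adjoin_deg bs A (E + F) (Cmul s t).
Proof.
  intro HA; revert s t; induction bs as [|b bs IH]; intros s t Hs Ht; [apply HA; auto|].
  apply in_monomials_cons in Hs as [j [y [Hj [Hy ->]]]].
  apply in_monomials_cons in Ht as [k [z [Hk [Hz ->]]]].
  apply Qspan_eq with (Cmul (Cpow_nat b (j + k)) (Cmul y z)); [|rewrite Cpow_nat_add; ring].
  apply Qspan_monomials_cons; [lia | apply IH; auto].
Qed.

Lemma adjoin_deg_mul bs A E F x y : Qalg A ->
  adjoin_deg bs A E x -> adjoin_deg bs A F y -> adjoin_deg bs A (E + F) (Cmul x y).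
Proof. intro HA; apply Qspan_mul; intros; apply monomials_mul; auto. Qed.

Lemma adjoin_deg_pow bs A c x k : Qalg A ->
  adjoin_deg bs A c x -> adjoin_deg bs A (c * k) (Cpow_nat x k).
Proof.
  intros HA Hx; induction k as [|k IH]; simpl.
  - rewrite Nat.mul_0_r; apply adjoin_deg_Qspan, HA.
  - replace (c * S k)%nat with (c + c * k)%nat by lia; apply adjoin_deg_mul; auto.
Qed.


Definition adjoin (bs A : list C) (x : C) : Prop := exists D, adjoin_deg bs A D x.

Section Adjoin.
Variables (bs A : list C).
Hypothesis HA : Qalg A.

Lemma adjoin_add x y : adjoin bs A x -> adjoin bs A y -> adjoin bs A (Cadd x y).
Proof.
  intros [D1 H1] [D2 H2]; exists (D1 + D2)%nat; apply Qspan_add;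
    [apply adjoin_deg_mono with D1 | apply adjoin_deg_mono with D2]; auto; lia.
Qed.

Lemma adjoin_mul x y : adjoin bs A x -> adjoin bs A y -> adjoin bs A (Cmul x y).
Proof. intros [D1 H1] [D2 H2]; exists (D1 + D2)%nat; apply adjoin_deg_mul; auto. Qed.

Lemma adjoin_Qspan x : Qspan A x -> adjoin bs A x.
Proof. exists 0%nat; apply adjoin_deg_Qspan, H. Qed.

Lemma adjoin_gen b : In b bs -> adjoin bs A b.
Proof. exists 1%nat; apply adjoin_deg_gen; auto. Qed.

Lemma adjoin_pow x k : adjoin bs A x -> adjoin bs A (Cpow_nat x k).
Proof. intros [D H]; exists (D * k)%nat; apply adjoin_deg_pow; auto. Qed.

Lemma adjoin_qpoly_eval p xs : Forall (adjoin bs A) xs -> adjoin bs A (qpoly_eval p xs).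
Proof.
  intro Hxs; induction p as [|[q m] p IH]; [exists 0%nat; constructor|].
  unfold qpoly_eval; simpl; apply adjoin_add; [clear IH | exact IH].
  apply adjoin_mul; [apply adjoin_Qspan, Qalg_Qc, HA|].
  unfold mono_eval; revert xs Hxs; induction m as [|e m IHm]; intros [|x xs] Hxs;
    try exact (adjoin_Qspan _ (proj1 HA)).
  inversion Hxs; subst; simpl; apply adjoin_mul; [apply adjoin_pow|apply IHm]; auto.
Qed.

End Adjoin.

(** * A transcendence degree bound *)

Lemma exists_deg_gap m n c a :
  (m < n)%nat -> exists D, (S (n * (c * D)) ^ m * a < S D ^ n)%nat.
Proof.
  intro Hmn; set (K := S (n * c)); exists (K ^ m * a)%nat; set (D := (K ^ m * a)%nat).
  assert (H1 : (S (n * (c * D)) <= K * S D)%nat) by (unfold K; nia).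
  assert (H2 : (S (n * (c * D)) ^ m <= K ^ m * S D ^ m)%nat)
    by (rewrite <- Nat.pow_mul_l; apply Nat.pow_le_mono_l, H1).
  assert (H3 : (S D ^ m <= S D ^ (n - 1))%nat) by (apply Nat.pow_le_mono_r; lia).
  assert (H4 : (S D ^ n = S D * S D ^ (n - 1))%nat)
    by (replace n with (S (n - 1)) at 1 by lia; reflexivity).
  assert (H5 : (1 <= S D ^ (n - 1))%nat)
    by (apply Nat.le_trans with (1 ^ (n - 1))%nat;
        [rewrite Nat.pow_1_l; lia | apply Nat.pow_le_mono_l; lia]).
  rewrite H4; apply Nat.le_lt_trans with (K ^ m * S D ^ m * a)%nat; [nia|].
  apply Nat.le_lt_trans with (K ^ m * a * S D ^ (n - 1))%nat; [nia|].
  unfold D at 2; nia.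
Qed.

Fixpoint exponent_vectors (n D : nat) : list (list nat) :=
  match n with
  | O => nil :: nil
  | S n' => flat_map (fun a => map (cons a) (exponent_vectors n' D)) (seq 0 (S D))
  end.

Lemma length_exponent_vectors n D : length (exponent_vectors n D) = (S D ^ n)%nat.
Proof.
  induction n as [|n IH]; [reflexivity|]; cbn [exponent_vectors].
  rewrite (flat_map_constant_length (c := (S D ^ n)%nat));
    [rewrite length_seq; simpl; lia | intros; rewrite length_map; exact IH].
Qed.

Lemma in_exponent_vectors n D al : In al (exponent_vectors n D) ->
  length al = n /\ Forall (fun a => a <= D)%nat al.
Proof.
  revert al; induction n as [|n IH]; intros al H; cbn [exponent_vectors] in H.
  - destruct H as [<- | []]; simpl; auto.
  - apply in_flat_map in H as [a [Ha H]]; apply in_map_iff in H as [b [<- Hb]].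
    apply in_seq in Ha; destruct (IH _ Hb); simpl; split; auto; constructor; auto; lia.
Qed.

Lemma NoDup_exponent_vectors n D : NoDup (exponent_vectors n D).
Proof.
  induction n as [|n IH]; cbn [exponent_vectors]; [repeat constructor; auto|].
  generalize (seq_NoDup (S D) 0); generalize (seq 0 (S D)).
  induction l as [|a l IHl]; intro Hl; simpl; [constructor|].
  inversion Hl; subst; apply NoDup_app; auto.
  - apply FinFun.Injective_map_NoDup; auto; intros x y E; injection E; auto.
  - intros x Hx1 Hx2; apply in_map_iff in Hx1 as [b [<- _]].
    apply in_flat_map in Hx2 as [a' [Ha' Hx2]]; apply in_map_iff in Hx2 as [b' [E _]].
    injection E; intros; subst; contradiction.
Qed.

Lemma map_snd_combine {X Y} (l1 : list X) (l2 : list Y) :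
  length l1 = length l2 -> map snd (combine l1 l2) = l2.
Proof.
  revert l2; induction l1; intros [|b l2] H; simpl in *; try discriminate; auto.
  rewrite IHl1; auto.
Qed.

Lemma in_combine_l_ex {X Y} (l1 : list X) (l2 : list Y) x :
  length l1 = length l2 -> In x l1 -> exists y, In (x, y) (combine l1 l2).
Proof.
  revert l2; induction l1; intros [|b l2] H Hx; simpl in *; try discriminate; try contradiction.
  destruct Hx as [-> | Hx]; [eauto|]; destruct (IHl1 l2) as [y Hy]; auto; eauto.
Qed.

Lemma qpoly_eval_combine qs als ys c :
  Cmul (qpoly_eval (combine qs als) ys) c
  = lincomb qs (map (fun al => Cmul (mono_eval al ys) c) als).
Proof.
  revert als; induction qs as [|q qs IH]; intros [|al als];
    try (unfold qpoly_eval, lincomb; simpl; ring).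
  cbn [combine map]; rewrite lincomb_cons, <- IH; unfold qpoly_eval, Qc; simpl; ring.
Qed.

Definition adjoin_fraction (c : nat) (bs A : list C) (t : C * (C * C)) : Prop :=
  let '(y, (u, w)) := t in Cmul y w = u /\ w <> C0 /\ adjoin_deg bs A c u /\ adjoin_deg bs A c w.

Fixpoint cleared_monomial (tr : list (C * (C * C))) (al : list nat) (D : nat) : C :=
  match tr, al with
  | (_, (u, w)) :: tr', a :: al' =>
      Cmul (Cmul (Cpow_nat u a) (Cpow_nat w (D - a))) (cleared_monomial tr' al' D)
  | _, _ => C1
  end.

Fixpoint denominator_power (tr : list (C * (C * C))) (D : nat) : C :=
  match tr with
  | (_, (_, w)) :: tr' => Cmul (Cpow_nat w D) (denominator_power tr' D)
  | nil => C1
  end.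

Section Fractions.
Variables (c : nat) (bs A : list C).

Lemma denominator_power_neq0 tr D :
  Forall (adjoin_fraction c bs A) tr -> denominator_power tr D <> C0.
Proof.
  induction 1 as [|[y [u w]] tr [_ [Hw _]] _ IH]; simpl; [exact C1_neq_C0|].
  intro E; apply Cmul_integral in E as [E | E]; [exact (Cpow_nat_neq0 w D Hw E) | exact (IH E)].
Qed.

Lemma mono_eval_clear tr al D :
  Forall (adjoin_fraction c bs A) tr -> length al = length tr ->
  Forall (fun a => a <= D)%nat al ->
  Cmul (mono_eval al (map fst tr)) (denominator_power tr D) = cleared_monomial tr al D.
Proof.
  intro Htr; revert al; induction Htr as [|[y [u w]] tr [Hu _] _ IH];
    intros [|a al] Hl Hal; simpl in *; try discriminate; [unfold mono_eval; simpl; ring|].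
  inversion_clear Hal as [|? ? Ha Hal'].
  change (mono_eval (a :: al) (y :: map fst tr))
    with (Cmul (Cpow_nat y a) (mono_eval al (map fst tr))).
  rewrite <- IH by auto; rewrite <- Hu, Cpow_nat_mul.
  replace D with (a + (D - a))%nat at 1 by lia; rewrite Cpow_nat_add; ring.
Qed.

Lemma cleared_monomial_deg tr al D : Qalg A ->
  Forall (adjoin_fraction c bs A) tr -> Forall (fun a => a <= D)%nat al ->
  adjoin_deg bs A (length tr * (c * D)) (cleared_monomial tr al D).
Proof.
  intros HA Htr; revert al; induction Htr as [|[y [u w]] tr [_ [_ [Hu Hw]]] _ IH];
    intros [|a al] Hal; simpl; try exact (adjoin_deg_Qspan _ _ _ _ (proj1 HA)).
  inversion Hal; subst; apply adjoin_deg_mul; auto.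
  eapply adjoin_deg_mono;
    [|apply adjoin_deg_mul; [exact HA | apply (adjoin_deg_pow _ _ _ _ a HA Hu)
                                      | apply (adjoin_deg_pow _ _ _ _ (D - a) HA Hw)]].
  nia.
Qed.

End Fractions.

Lemma in_field_gen_adjoin_fractions bs A xs ys : Qalg A ->
  Forall (adjoin bs A) xs -> Forall (in_field_gen xs) ys ->
  exists c tr, map fst tr = ys /\ Forall (adjoin_fraction c bs A) tr.
Proof.
  intros HA Hxs; induction 1 as [|y ys [P [Qd [_ [_ [HQ HE]]]]] _ [c [tr [<- Htr]]]];
    [exists 0%nat, nil; simpl; auto|].
  destruct (adjoin_qpoly_eval bs A HA P xs Hxs) as [D1 HP].
  destruct (adjoin_qpoly_eval bs A HA Qd xs Hxs) as [D2 HQd].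
  exists (c + D1 + D2)%nat, ((y, (qpoly_eval P xs, qpoly_eval Qd xs)) :: tr); split; [reflexivity|].
  constructor.
  - repeat split; [exact HE | exact HQ | apply adjoin_deg_mono with D1
                                      | apply adjoin_deg_mono with D2]; auto; lia.
  - eapply Forall_impl; [|exact Htr]; intros [a [b d]] [? [? [? ?]]];
      repeat split; auto; apply adjoin_deg_mono with c; auto; lia.
Qed.

Lemma Q_lin_dep_monomials_not_alg_indep ys D B : B <> C0 ->
  Q_lin_dep (map (fun al => Cmul (mono_eval al ys) B) (exponent_vectors (length ys) D)) ->
  ~ alg_indep ys.
Proof.
  set (als := exponent_vectors (length ys) D).
  intros HB [qs [Hl [Hnz E]]] Hind; rewrite length_map in Hl.
  apply (Hind (combine qs als)).
  - split.
    + apply Forall_forall; intros [q al] Hin; apply in_combine_r, in_exponent_vectors in Hin.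
      apply Hin.
    + rewrite map_snd_combine by exact Hl; apply NoDup_exponent_vectors.
  - apply Exists_exists in Hnz as [q [Hq Hq0]].
    destruct (in_combine_l_ex qs als q Hl Hq) as [al Hal]; exists (q, al); auto.
  - rewrite <- qpoly_eval_combine in E.
    apply Cmul_integral in E as [E | E]; [exact E | contradiction].
Qed.

Theorem not_trdeg_ge_adjoin bs A xs n : Qalg A -> Forall (adjoin bs A) xs ->
  (length bs < n)%nat -> ~ trdeg_ge xs n.
Proof.
  intros HA Hxs Hn [ys [Hlen [Hys Hind]]].
  destruct (in_field_gen_adjoin_fractions bs A xs ys HA Hxs Hys) as [c [tr [Htr Hfr]]].
  assert (Hltr : length tr = n) by (rewrite <- Hlen, <- Htr, length_map; reflexivity).
  destruct (exists_deg_gap (length bs) n c (length A) Hn) as [D HD].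
  set (B := denominator_power tr D).
  set (vs := map (fun al => Cmul (mono_eval al ys) B) (exponent_vectors (length ys) D)).
  assert (Hvs : Forall (Qspan (monomials bs A (n * (c * D)))) vs).
  { apply Forall_forall; intros v Hv; apply in_map_iff in Hv as [al [<- Hal]].
    apply in_exponent_vectors in Hal as [Hal1 Hal2]; unfold B; rewrite <- Htr.
    rewrite (mono_eval_clear c bs A) by (auto; rewrite Hal1, Hlen; auto).
    rewrite <- Hltr; apply cleared_monomial_deg; auto. }
  apply (Q_lin_dep_monomials_not_alg_indep ys D B);
    [apply denominator_power_neq0 with c bs A; auto | | exact Hind].
  apply Qspan_Q_lin_dep with (monomials bs A (n * (c * D))); [|exact Hvs].
  unfold vs; rewrite length_monomials, length_map, length_exponent_vectors, Hlen; exact HD.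
Qed.

(** * Consequences of Schanuel's conjecture *)

Lemma Schanuel_adjoin_generators A bs alphas : Schanuel -> Qalg A -> Q_lin_indep alphas ->
  Forall (adjoin bs A) (alphas ++ map Cexp alphas) -> (length alphas <= length bs)%nat.
Proof.
  intros HS HA Hind Hadj; apply Nat.nlt_ge; intro Hlt.
  exact (not_trdeg_ge_adjoin bs A _ _ HA Hadj Hlt (HS alphas Hind)).
Qed.

Lemma Q_lin_indep_C1 : Q_lin_indep (C1 :: nil).
Proof.
  apply Q_lin_indep_cons; [intro H; apply Qspan_nil in H; exact (C1_neq_C0 H)|].
  intros [|q qs] Hl _; [constructor | discriminate].
Qed.

Lemma Qalgebraic_C1 : Qalgebraic C1.
Proof. apply Qalgebraic_of_sqr with 1%Q; rewrite Qc_1; ring. Qed.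

Lemma Qspan_C1_Qc x : Qspan (C1 :: nil) x -> exists q, x = Qc q.
Proof.
  intro Hx; apply Qspan_cons_inv in Hx as [q [x' [Hx' ->]]]; apply Qspan_nil in Hx' as ->.
  exists q; ring.
Qed.

Section ExpTower.
Variables (l b : C).
Hypotheses (HS : Schanuel) (Hl : l <> C0) (Hel : Qalgebraic (Cexp l))
  (Hb : Qalgebraic b) (Hb_irr : forall q, b <> Qc q).

Lemma Q_lin_indep_b_C1 : Q_lin_indep (b :: C1 :: nil).
Proof.
  apply Q_lin_indep_cons, Q_lin_indep_C1.
  intro H; apply Qspan_C1_Qc in H as [q Hq]; exact (Hb_irr q Hq).
Qed.

(* Gelfond-Schneider, from Schanuel's conjecture applied to [b l, l]. *)
Lemma Cexp_mul_not_Qalgebraic : ~ Qalgebraic (Cexp (Cmul b l)).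
Proof.
  intro Hw.
  destruct (Qalgebraic_common (Cexp l :: b :: Cexp (Cmul b l) :: nil)) as [A [HA HAs]];
    [repeat constructor; auto|].
  inversion_clear HAs as [|? ? Hel' HAs']; inversion_clear HAs' as [|? ? Hb' HAs''];
    inversion_clear HAs'' as [|? ? Hw' _].
  assert (Hlen : (length (map (fun v => Cmul v l) (b :: C1 :: nil)) <= length (l :: nil))%nat).
  { apply Schanuel_adjoin_generators with A; auto.
    - apply Q_lin_indep_map_mul_r, Q_lin_indep_b_C1; exact Hl.
    - simpl; replace (Cmul C1 l) with l by ring.
      assert (Hl_adj : adjoin (l :: nil) A l) by (apply (adjoin_gen _ _ HA); left; auto).
      repeat apply Forall_cons; auto using Forall_nil, adjoin_Qspan, adjoin_mul. }
  simpl in Hlen; lia.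
Qed.

Theorem Cexp_tower_transcendental : transcendental (Cexp (Cmul (Cexp (Cmul b l)) l)).
Proof.
  set (w := Cexp (Cmul b l)); set (z := Cexp (Cmul w l)).
  apply NNPP; intro Hz; apply not_transcendental_Qalgebraic in Hz.
  assert (Hind : Q_lin_indep (w :: b :: C1 :: nil)).
  { apply Q_lin_indep_cons; [|exact Q_lin_indep_b_C1].
    intro Hw; apply Cexp_mul_not_Qalgebraic.
    apply Qalgebraic_Qspan with (b :: C1 :: nil); [|exact Hw].
    repeat constructor; auto using Qalgebraic_C1. }
  destruct (Qalgebraic_common (Cexp l :: b :: z :: nil)) as [A [HA HAs]];
    [repeat constructor; auto|].
  inversion_clear HAs as [|? ? Hel' HAs']; inversion_clear HAs' as [|? ? Hb' HAs''];
    inversion_clear HAs'' as [|? ? Hz' _].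
  assert (Hlen : (length (map (fun v => Cmul v l) (w :: b :: C1 :: nil))
                  <= length (l :: w :: nil))%nat).
  { apply Schanuel_adjoin_generators with A; auto.
    - apply Q_lin_indep_map_mul_r; auto.
    - simpl; replace (Cmul C1 l) with l by ring.
      assert (Hl_adj : adjoin (l :: w :: nil) A l) by (apply (adjoin_gen _ _ HA); left; auto).
      assert (Hw_adj : adjoin (l :: w :: nil) A w)
        by (apply (adjoin_gen _ _ HA); right; left; auto).
      repeat apply Forall_cons; auto using Forall_nil, adjoin_Qspan, adjoin_mul. }
  simpl in Hlen; lia.
Qed.

End ExpTower.

Theorem Cpow_tower_transcendental a b : Schanuel ->
  CLog a <> C0 -> Cexp (CLog a) = a -> Qalgebraic a ->
  Qalgebraic b -> (forall q, b <> Qc q) -> transcendental (Cpow a (Cpow a b)).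
Proof.
  intros HS Hl Ha Halg Hb Hb_irr; unfold Cpow.
  apply Cexp_tower_transcendental; auto; rewrite Ha; exact Halg.
Qed.

Lemma imaginary_neq_Qc y q : y <> 0 -> (0, y) <> Qc q.
Proof. intros Hy E; injection E; intros; auto. Qed.

Lemma Z_sqr_neq_2sqr n a b :
  (Z.to_nat b <= n)%nat -> (0 < b)%Z -> (a * a <> 2 * (b * b))%Z.
Proof.
  revert a b; induction n as [|n IH]; intros a b Hn Hb E; [lia|].
  assert (Ha : Z.even a = true).
  { assert (Z.even (a * a) = true) by (rewrite E; apply Z.even_even).
    rewrite Z.even_mul in H; destruct (Z.even a); auto. }
  apply Z.even_spec in Ha as [k ->].
  assert (Hb2 : Z.even b = true).
  { assert (Z.even (b * b) = true)
      by (replace (b * b)%Z with (2 * (k * k))%Z by lia; apply Z.even_even).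
    rewrite Z.even_mul in H; destruct (Z.even b); auto. }
  apply Z.even_spec in Hb2 as [m ->].
  apply (IH k m); lia.
Qed.

Lemma sqrt2_irrational q : Q2R q <> sqrt 2.
Proof.
  intro H; destruct q as [a b]; unfold Q2R in H; simpl in H.
  assert (Hb : IZR (Z.pos b) <> 0) by (apply not_0_IZR; lia).
  apply (Z_sqr_neq_2sqr (Z.to_nat (Z.pos b)) a (Z.pos b)); [lia | lia|].
  apply eq_IZR; rewrite !mult_IZR.
  replace (IZR a) with (sqrt 2 * IZR (Z.pos b)) by (rewrite <- H; field; auto).
  replace (sqrt 2 * IZR (Z.pos b) * (sqrt 2 * IZR (Z.pos b)))
    with (sqrt 2 * sqrt 2 * (IZR (Z.pos b) * IZR (Z.pos b))) by ring.
  rewrite sqrt_sqrt by lra; reflexivity.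
Qed.

Lemma CLog_Ci : CLog Ci = (0, PI / 2).
Proof.
  unfold CLog, Cmod, Carg, Ci, Cre, Cim; simpl.
  replace (0 * 0 + 1 * 1) with 1 by ring; rewrite sqrt_1, ln_1; f_equal.
  destruct (Rlt_dec 0 0); [lra|]; destruct (Rlt_dec 0 0); [lra|].
  destruct (Rlt_dec 0 1); [reflexivity | lra].
Qed.

Lemma Cexp_CLog_Ci : Cexp (CLog Ci) = Ci.
Proof.
  rewrite CLog_Ci; unfold Cexp, Ci, Cre, Cim; simpl.
  rewrite cos_PI2, sin_PI2, exp_0; f_equal; ring.
Qed.

Lemma sqrt2_gt_1 : 1 < sqrt 2.
Proof. rewrite <- sqrt_1; apply sqrt_lt_1_alt; lra. Qed.

Lemma CLog_Csqrt2 : CLog Csqrt2 = RtoC (ln (sqrt 2)).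
Proof.
  pose proof sqrt2_gt_1.
  unfold CLog, Cmod, Carg, Csqrt2, RtoC, Cre, Cim; simpl.
  replace (sqrt 2 * sqrt 2 + 0 * 0) with 2 by (rewrite sqrt_sqrt; lra); f_equal.
  destruct (Rlt_dec 0 (sqrt 2)); [|lra]; unfold Rdiv; rewrite Rmult_0_l, atan_0; reflexivity.
Qed.

Lemma Cexp_CLog_Csqrt2 : Cexp (CLog Csqrt2) = Csqrt2.
Proof.
  rewrite CLog_Csqrt2; unfold Cexp, Csqrt2, RtoC, Cre, Cim; simpl.
  rewrite cos_0, sin_0, exp_ln by (pose proof sqrt2_gt_1; lra); f_equal; ring.
Qed.

Lemma Cpow_Ci_exp_PI : RtoC (exp PI) = Cpow Ci (0, -2).
Proof.
  unfold Cpow; rewrite CLog_Ci; unfold Cexp, Cmul, RtoC, Cre, Cim; simpl.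
  replace (0 * 0 - -2 * (PI / 2)) with PI by field.
  replace (0 * (PI / 2) + -2 * 0) with 0 by ring.
  rewrite cos_0, sin_0; f_equal; ring.
Qed.

Lemma Qalgebraic_Ci : Qalgebraic Ci.
Proof.
  apply Qalgebraic_of_sqr with (- (1))%Q.
  unfold Ci, Cmul, Qc, RtoC, Cre, Cim; simpl; rewrite Q2R_opp; unfold Q2R; simpl; f_equal; field.
Qed.

Lemma Qalgebraic_Csqrt2 : Qalgebraic Csqrt2.
Proof.
  apply Qalgebraic_of_sqr with 2%Q; unfold Csqrt2, Cmul, Qc, RtoC, Cre, Cim; simpl.
  rewrite sqrt_sqrt by lra; unfold Q2R; simpl; f_equal; field.
Qed.

Theorem mainTheorem4 :
  Schanuel ->
  transcendental (Cpow Csqrt2 (Cpow Csqrt2 Csqrt2)) /\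
  transcendental (Cpow Ci (Cpow Ci Ci)) /\
  transcendental (Cpow Ci (RtoC (exp PI))).
Proof.
  intro HS.
  assert (Hi : CLog Ci <> C0) by (rewrite CLog_Ci; intro E; injection E; pose proof PI_RGT_0; lra).
  split; [|split].
  - apply Cpow_tower_transcendental; auto using Cexp_CLog_Csqrt2, Qalgebraic_Csqrt2.
    + rewrite CLog_Csqrt2; intro E; injection E; intro E'.
      pose proof sqrt2_gt_1; rewrite <- ln_1 in E'; apply ln_inv in E'; lra.
    + intros q E; injection E; intro E'; exact (sqrt2_irrational q (eq_sym E')).
  - apply Cpow_tower_transcendental; auto using Cexp_CLog_Ci, Qalgebraic_Ci.
    intro q; apply imaginary_neq_Qc; lra.
  - rewrite Cpow_Ci_exp_PI; apply Cpow_tower_transcendental; auto using Cexp_CLog_Ci, Qalgebraic_Ci.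
    + apply Qalgebraic_of_sqr with (- (4))%Q.
      unfold Cmul, Qc, RtoC, Cre, Cim; simpl; rewrite Q2R_opp; unfold Q2R; simpl; f_equal; field.
    + intro q; apply imaginary_neq_Qc; lra.
Qed.
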